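(* Let $\flat\in\{>,<\}$. For $\imath\in\{1,\dots,2n-1\}$ set $\Xi_\imath=\max\{r\in\frac12\mathbb Z\mid(\imath,r)\in\widehat I^{\mathrm{tw},\flat}_\xi\}$. Then: - $\Xi_\imath=\xi(\imath)$ if $1\le\imath\le n-1$; - $\Xi_n=\frac12(\xi(n-1)+\xi(n))+1$ if $\flat={>}$; - $\Xi_n=\frac12(\xi(n-1)+\xi(n))$ if $\flat={<}$; - $\Xi_\imath=\xi(\imath-1)$ if $n+1\le\imath\le 2n-1$.
   Context: Fix $n\ge2$. Let $\mathcal Q$ be a quiver whose underlying graph is the Dynkin diagram of type $\mathrm A_{2n-2}$ (vertices $1,\dots,2n-2$, edges $\{i,i+1\}$), and let $\xi:\{1,\dots,2n-2\}\to\mathbb Z$ be a height function: $\xi(j)=\xi(i)+1$ whenever there is an arrow $i\to j$. Let $\widehat I_\xi=\{(i,p):1\le i\le 2n-2,\ p\equiv\xi(i)\ (\mathrm{mod}\ 2),\ \xi(2n-1-i)-(2n-1)<p\le\xi(i)\}$. For $\flat\in\{>,<\}$, $\widehat I^{\mathrm{tw},\flat}_\xi\subset\{1,\dots,2n-1\}\times\frac12\mathbb Z$ is the union of: - $\{(i,p)\in\widehat I_\xi: i\le n-1\}$; - $\{(i+1,p):(i,p)\in\widehat I_\xi,\ i\ge n\}$; - the points $(n,p-\frac12)$ for which $\{(n-1,p-1),(n,p)\}\subset\widehat I_\xi$ or $\{(n,p-1),(n-1,p)\}\subset\widehat I_\xi$; - the point $(n,r_M+\frac12)$ if $\flat={>}$,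 resp. $(n,r_m-\frac12)$ if $\flat={<}$, where $r_M$, resp. $r_m$, is the maximum, resp. minimum, of $\{p:(n-1,p)\in\widehat I_\xi\text{ or }(n,p)\in\widehat I_\xi\}$. *)

(* nat indices, int heights, rat for (1/2)Z coordinates. *)
From HB Require Import structures.
From mathcomp Require Import all_boot all_order all_algebra.
Set Implicit Arguments. Unset Strict Implicit. Unset Printing Implicit Defensive.
Import Order.TTheory GRing.Theory Num.Theory.
Local Open Scope ring_scope.

(* A quiver with underlying graph the Dynkin diagram A_(2n-2): the orientation
   of edge {i,i+1} (1 <= i <= 2n-3) is given by [arr i]:
   arr i = true  means the arrow i -> i+1,
   arr i = false means the arrow i+1 -> i. *)

Definition height_function (n : nat) (arr : nat -> bool) (xi : nat -> int) : Prop :=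
  forall i : nat, (1 <= i)%N -> (i <= 2 * n - 3)%N ->
    if arr i then xi i.+1 = xi i + 1 else xi i = xi i.+1 + 1.

Definition Ihat (n : nat) (xi : nat -> int) (i : nat) (p : int) : Prop :=
  [/\ (1 <= i)%N, (i <= 2 * n - 2)%N,
      (2 %| p - xi i)%Z,
      xi (2 * n - 1 - i)%N - (2 * n - 1)%:Z < p & p <= xi i].

Inductive flat := FGt | FLt.

Definition is_max (S : rat -> Prop) (m : rat) : Prop :=
  S m /\ forall r, S r -> r <= m.
Definition is_min (S : rat -> Prop) (m : rat) : Prop :=
  S m /\ forall r, S r -> m <= r.

Definition Rset (n : nat) (xi : nat -> int) (r : rat) : Prop :=
  exists p : int, r = p%:~R /\ (Ihat n xi (n - 1)%N p \/ Ihat n xi n p).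

Definition Itw (n : nat) (xi : nat -> int) (fl : flat) (i : nat) (r : rat) : Prop :=
  [\/ (i <= n - 1)%N /\ (exists p : int, r = p%:~R /\ Ihat n xi i p),
      (exists i' : nat, [/\ (n <= i')%N, i = i'.+1 &
                           exists p : int, r = p%:~R /\ Ihat n xi i' p]),
      i = n /\ (exists p : int, r = p%:~R - 1 / 2 /\
                 ((Ihat n xi (n - 1)%N (p - 1) /\ Ihat n xi n p) \/
                  (Ihat n xi n (p - 1) /\ Ihat n xi (n - 1)%N p)))
    | i = n /\ (match fl with
                | FGt => exists rM, is_max (Rset n xi) rM /\ r = rM + 1 / 2
                | FLt => exists rm, is_min (Rset n xi) rm /\ r = rm - 1 / 2
                end)].

From HB Require Import structures.
From mathcomp Require Import all_boot all_order all_algebra.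
From mathcomp Require Import zify lra.
Import Order.TTheory GRing.Theory Num.Theory.
Local Open Scope ring_scope.

(* A height function is 1-Lipschitz, so (i, xi i) lies in \widehat I_xi and
   xi i is the top of column i; the columns n+1, ..., 2n-1 of the twisted set
   are copies of the columns n, ..., 2n-2.  In column n the heights
   a = xi (n-1) and b = xi n differ by one, so the interleaving points
   p - 1/2 peak at max(a, b) - 1/2 = (a + b)/2.  The extra point is
   max(a, b) + 1/2 for [FGt], and at most min(a, b) - 1/2 for [FLt]. *)

Lemma is_max_eq (S T : rat -> Prop) (m : rat) :
  (forall r, S r <-> T r) -> is_max T m -> is_max S m.
Proof. by move=> eST [Tm T_le]; split=> [|r /eST]; [apply/eST | apply: T_le]. Qed.

Lemma is_max_unique {S : rat -> Prop} {m m' : rat} :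
  is_max S m -> is_max S m' -> m = m'.
Proof. by move=> [Sm S_le] [Sm' S_le']; apply/eqP; rewrite eq_le S_le ?S_le'. Qed.

Lemma is_max_or (S T : rat -> Prop) (m : rat) :
  is_max S m -> (forall r, T r -> r <= m) -> is_max (fun r => S r \/ T r) m.
Proof. by move=> [Sm S_le] T_le; split=> [|r [/S_le | /T_le]]; [left|..]. Qed.

Definition Itw_mid (n : nat) (xi : nat -> int) (r : rat) : Prop :=
  exists p : int, r = p%:~R - 1 / 2 /\
    ((Ihat n xi (n - 1)%N (p - 1) /\ Ihat n xi n p) \/
     (Ihat n xi n (p - 1) /\ Ihat n xi (n - 1)%N p)).

Definition Itw_extra (n : nat) (xi : nat -> int) (fl : flat) (r : rat) : Prop :=
  match fl with
  | FGt => exists rM, is_max (Rset n xi) rM /\ r = rM + 1 / 2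
  | FLt => exists rm, is_min (Rset n xi) rm /\ r = rm - 1 / 2
  end.

Section TwistedColumns.

Context {n : nat} {arr : nat -> bool} {xi : nat -> int}.
Hypothesis hn : (2 <= n)%N.
Hypothesis hxi : height_function n arr xi.

Lemma height_function_lipschitz i j : (1 <= i)%N -> (i <= j)%N ->
  (j <= 2 * n - 2)%N -> `|xi j - xi i| <= (j - i)%:Z.
Proof.
move=> i_ge1 le_ij; rewrite -(subnKC le_ij); elim: (j - i)%N => [|d IHd] le_id.
  by rewrite addn0 subrr.
have := hxi (i + d)%N ltac:(lia) ltac:(lia); rewrite -addnS.
by have := IHd ltac:(lia); case: (arr (i + d)%N); lia.
Qed.

Lemma Ihat_top i : (1 <= i)%N -> (i <= 2 * n - 2)%N -> Ihat n xi i (xi i).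
Proof.
move=> i_ge1 i_le; split=> //; first by rewrite subrr dvdz0.
set j := (2 * n - 1 - i)%N.
have [le_ij | lt_ji] := leqP i j.
  by have := @height_function_lipschitz i j i_ge1 le_ij ltac:(lia); lia.
by have := @height_function_lipschitz j i ltac:(lia) (ltnW lt_ji) i_le; lia.
Qed.

Lemma is_max_Ihat_column i : (1 <= i)%N -> (i <= 2 * n - 2)%N ->
  is_max (fun r => exists p : int, r = p%:~R /\ Ihat n xi i p) (xi i)%:~R.
Proof.
move=> i_ge1 i_le; split; first by exists (xi i); split; last exact: Ihat_top.
by move=> _ [p [-> [_ _ _ _ le_p]]]; rewrite ler_int.
Qed.

Lemma height_function_center :
  xi n = xi (n - 1)%N + 1 \/ xi (n - 1)%N = xi n + 1.
Proof.
have := hxi (n - 1)%N ltac:(lia) ltac:(lia).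
by rewrite (_ : (n - 1).+1 = n)%N; last lia; case: arr; [left | right].
Qed.

Let a : rat := (xi (n - 1)%N)%:~R.
Let b : rat := (xi n)%:~R.

Lemma height_function_centerQ : b = a + 1 \/ a = b + 1.
Proof. by rewrite /a /b; case: height_function_center => ->; [left|right]; rewrite intrD. Qed.

Lemma Ihat_center_le p :
  Ihat n xi (n - 1)%N p \/ Ihat n xi n p -> p%:~R <= (a + b) / 2 + 1 / 2.
Proof.
move=> [[_ _ _ _] | [_ _ _ _]]; rewrite -(ler_int rat) -/a -/b => le_p;
  case: height_function_centerQ => e; lra.
Qed.

Lemma is_max_Rset : is_max (Rset n xi) ((a + b) / 2 + 1 / 2).
Proof.
split; last by move=> _ [p [-> /Ihat_center_le]].
case: height_function_centerQ => e.
- by exists (xi n); split; [rewrite -/b; lra | right; apply: Ihat_top; lia].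
- by exists (xi (n - 1)%N); split; [rewrite -/a; lra | left; apply: Ihat_top; lia].
Qed.

Lemma is_max_Itw_mid : is_max (Itw_mid n xi) ((a + b) / 2).
Proof.
split; last first.
  move=> _ [p [-> [[_ hi] | [_ hi]]]];
    [have := Ihat_center_le _ (or_intror hi) | have := Ihat_center_le _ (or_introl hi)];
    lra.
have [top_a top_b] : Ihat n xi (n - 1)%N (xi (n - 1)%N) /\ Ihat n xi n (xi n).
  by split; apply: Ihat_top; lia.
case: height_function_center => e.
- have eQ : b = a + 1 by rewrite /b e intrD.
  by exists (xi n); split; [rewrite -/b; lra | left; rewrite {1}e addrK].
- have eQ : a = b + 1 by rewrite /a e intrD.
  by exists (xi (n - 1)%N); split; [rewrite -/a; lra | right; rewrite {1}e addrK].
Qed.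

Lemma Itw_lowE fl {i} : (i <= n - 1)%N -> forall r,
  Itw n xi fl i r <-> exists p : int, r = p%:~R /\ Ihat n xi i p.
Proof.
move=> i_le r; split; last by move=> col; apply: Or41.
by case=> [[_ col] // | [i' [le_ni' e _]] | [e _] | [e _]]; lia.
Qed.

Lemma Itw_highE fl {i} : (n + 1 <= i)%N -> forall r,
  Itw n xi fl i r <-> exists p : int, r = p%:~R /\ Ihat n xi (i - 1)%N p.
Proof.
move=> i_ge r; split; last by move=> ?; apply: Or42; exists (i - 1)%N; split=> //; lia.
case=> [[i_le _] | [i' [_ -> col]] | [e _] | [e _]]; try lia.
by rewrite subn1.
Qed.

Lemma Itw_centerE fl r : Itw n xi fl n r <-> Itw_mid n xi r \/ Itw_extra n xi fl r.
Proof.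
split; last by case=> ?; [apply: Or43 | apply: Or44].
by case=> [[n_le _] | [i' [le_ni' e _]] | [_ mid] | [_ extra]]; [lia | lia | left | right].
Qed.

Lemma is_max_Itw_center_gt : is_max (Itw n xi FGt n) ((a + b) / 2 + 1).
Proof.
apply: is_max_eq (Itw_centerE FGt) _.
split; first by right; exists ((a + b) / 2 + 1 / 2); split; [exact: is_max_Rset | lra].
move=> r [mid | [rM [maxR ->]]]; first last.
  by rewrite (is_max_unique maxR is_max_Rset); lra.
by have [_ /(_ _ mid)] := is_max_Itw_mid; lra.
Qed.

Lemma is_max_Itw_center_lt : is_max (Itw n xi FLt n) ((a + b) / 2).
Proof.
apply: is_max_eq (Itw_centerE FLt) _.
apply: is_max_or (is_max_Itw_mid) _ => _ [rm [[Rrm _] ->]].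
by have [_ /(_ _ Rrm)] := is_max_Rset; lra.
Qed.

End TwistedColumns.

Theorem lemma3p23 (n : nat) (hn : (2 <= n)%N) (arr : nat -> bool)
  (xi : nat -> int) (hxi : height_function n arr xi) (fl : flat) :
  (forall i : nat, (1 <= i)%N -> (i <= n - 1)%N ->
     is_max (Itw n xi fl i) (xi i)%:~R) /\
  (fl = FGt -> is_max (Itw n xi fl n) (((xi (n - 1)%N)%:~R + (xi n)%:~R) / 2 + 1)) /\
  (fl = FLt -> is_max (Itw n xi fl n) (((xi (n - 1)%N)%:~R + (xi n)%:~R) / 2)) /\
  (forall i : nat, (n + 1 <= i)%N -> (i <= 2 * n - 1)%N ->
     is_max (Itw n xi fl i) (xi (i - 1)%N)%:~R).
Proof.
split; [|split; [|split]].
- move=> i i_ge1 i_le; apply: is_max_eq (Itw_lowE hn fl i_le) _.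
  by apply: (is_max_Ihat_column hn hxi); lia.
- by move=> ->; exact: is_max_Itw_center_gt hn hxi.
- by move=> ->; exact: is_max_Itw_center_lt hn hxi.
- move=> i i_ge i_le; apply: is_max_eq (Itw_highE hn fl i_ge) _.
  by apply: (is_max_Ihat_column hn hxi); lia.
Qed.
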